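(* Let $K$ be a field, $s\ge2$, $S=K[t_1,\ldots,t_s]$, and let $\mathcal{L}\subset\mathbb{Z}^s$ be a homogeneous lattice of rank $s-1$. Let ${\rm in}(I(\mathcal{L}))$ be the initial ideal of $I(\mathcal{L})$ with respect to the reverse lexicographical order. Then for every $\widetilde{\alpha}=\alpha+\mathcal{L}$ in the torsion subgroup $T(\mathbb{Z}^s/\mathcal{L})$ there exists a unique $a=(a_1,\ldots,a_s)\in\mathbb{Z}^s$ such that (i) $a_i\ge0$ for $i=1,\ldots,s-1$; (ii) $t_1^{a_1}\cdots t_{s-1}^{a_{s-1}}\notin{\rm in}(I(\mathcal{L}))$; and (iii) $a+\mathcal{L}=\alpha+\mathcal{L}$.
   Context: A lattice is a subgroup of $\mathbb{Z}^s$; it is homogeneous if $\sum_i a_i=0$ for every $a\in\mathcal{L}$. For $a\in\mathbb{Z}^s$ write $a=a^+-a^-$ with $a^+,a^-\in\mathbb{N}^s$ of disjoint supports, $t^c=t_1^{c_1}\cdots t_s^{c_s}$, and $I(\mathcal{L})=(\{t^{a^+}-t^{a^-}: a\in\mathcal{L}\})$. The reverse lexicographical order on monomials is: $t^b\succ t^a$ iff the last nonzero entry of $b-a$ is negative. The initial ideal ${\rm in}(L)$ is generated by the leading terms of the polynomials of $L$. $T(M)$ denotes the torsion subgroup of $M$. *)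

From mathcomp Require Import all_boot all_order all_algebra.
From mathcomp Require Import mpoly.
Set Implicit Arguments. Unset Strict Implicit. Unset Printing Implicit Defensive.
Import Order.TTheory GRing.Theory Num.Theory.
Local Open Scope ring_scope.

(* Z^s is represented by row vectors 'rV[int]_s ; entry i of a is a ord0 i. *)

Definition is_lattice (s : nat) (L : 'rV[int]_s -> Prop) : Prop :=
  L 0 /\ (forall a b, L a -> L b -> L (a - b)).

Definition homogeneous (s : nat) (L : 'rV[int]_s -> Prop) : Prop :=
  forall a, L a -> \sum_(i < s) a ord0 i = 0.

(* rank of L = maximal number of Q-linearly independent elements of L. *)
Definition lattice_rank (s : nat) (L : 'rV[int]_s -> Prop) (r : nat) : Prop :=
  (exists M : 'M[int]_(r, s), (forall i, L (row i M)) /\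
      \rank (map_mx (fun z : int => z%:~R : rat) M) = r) /\
  (forall M : 'M[int]_(r.+1, s), (forall i, L (row i M)) ->
      (\rank (map_mx (fun z : int => z%:~R : rat) M) <= r)%N).

Definition mpos (s : nat) (a : 'rV[int]_s) : 'X_{1..s} :=
  [multinom (if (0 <= a ord0 i)%R then `|a ord0 i|%N else 0%N) | i < s].
Definition mneg (s : nat) (a : 'rV[int]_s) : 'X_{1..s} :=
  [multinom (if (a ord0 i < 0)%R then `|a ord0 i|%N else 0%N) | i < s].

Definition ideal_gen (R : comNzRingType) (G : R -> Prop) (f : R) : Prop :=
  exists (n : nat) (c h : 'I_n -> R),
    (forall i, G (h i)) /\ f = \sum_(i < n) c i * h i.

Definition lattice_ideal (K : fieldType) (s : nat) (L : 'rV[int]_s -> Prop)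
  : {mpoly K[s]} -> Prop :=
  ideal_gen (fun g : {mpoly K[s]} =>
    exists a, L a /\ g = 'X_[mpos a] - 'X_[mneg a]).

(* Reverse lexicographic order: t^b > t^a iff the last nonzero entry of
   b - a is negative. *)
Definition revlex_gt (s : nat) (b a : 'X_{1..s}) : Prop :=
  exists i : 'I_s, (b i < a i)%N /\
    (forall j : 'I_s, (i < j)%N -> b j = a j).

Definition is_lead_term (K : fieldType) (s : nat) (f t : {mpoly K[s]}) : Prop :=
  exists m : 'X_{1..s}, m \in msupp f /\
    (forall m', m' \in msupp f -> m' != m -> revlex_gt m m') /\
    t = f@_m *: 'X_[m].

Definition initial_ideal (K : fieldType) (s : nat) (I : {mpoly K[s]} -> Prop)
  : {mpoly K[s]} -> Prop :=
  ideal_gen (fun t => exists f, I f /\ f != 0 /\ is_lead_term f t).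

Definition torsion_class (s : nat) (L : 'rV[int]_s -> Prop) (alpha : 'rV[int]_s)
  : Prop := exists k : nat, (0 < k)%N /\ L (alpha *+ k).

Definition trunc_mon (s : nat) (a : 'rV[int]_s) : 'X_{1..s} :=
  [multinom (if (i < s.-1)%N then `|a ord0 i|%N else 0%N) | i < s].

(* A monomial t^u lies in in(I(L)) iff some revlex-smaller v is congruent to u modulo L:
   the binomial t^u - t^v gives one direction; conversely the coefficients of any
   f in I(L) on a class of monomials modulo L sum to zero, so the leading monomial of f
   has a smaller partner in its class.
   As L has rank s-1 inside the hyperplane of zero coordinate sum, a multiple of each
   e_i - e_s lies in L, so the class of alpha has representatives a with a_i >= 0 for
   i < s. Those whose last coordinate is at least that of a fixed one are finitely many,
   and revlex descent among them stops at one whose truncated monomial is standard.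
   For two such representatives a, b with a_s <= b_s, the monomials t^(a - a_s e_s) and
   t^(b - a_s e_s) are congruent modulo L and the larger one has last exponent 0, so it
   is the truncated monomial of a or of b, which is then not standard. *)

From HB Require Import structures.
From mathcomp Require Import all_boot all_order all_algebra.
From mathcomp Require Import mpoly boolp zify ring.
Import Order.TTheory GRing.Theory Num.Theory.
Local Open Scope ring_scope.
Set Implicit Arguments. Unset Strict Implicit. Unset Printing Implicit Defensive.

Section Lattice.
Variables (s : nat) (L : 'rV[int]_s -> Prop).
Hypothesis latL : is_lattice L.

Lemma lattice0 : L 0. Proof. exact: latL.1. Qed.

Lemma latticeB a b : L a -> L b -> L (a - b). Proof. exact: latL.2. Qed.

Lemma latticeN a : L a -> L (- a).
Proof. by move=> La; rewrite -sub0r; apply: latticeB => //; apply: lattice0. Qed.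

Lemma latticeD a b : L a -> L b -> L (a + b).
Proof. by move=> La Lb; rewrite -[b]opprK; apply/latticeB/latticeN. Qed.

Lemma latticeMn a k : L a -> L (a *+ k).
Proof.
move=> La; elim: k => [|k IHk]; first by rewrite mulr0n; apply: lattice0.
by rewrite mulrS; apply: latticeD.
Qed.

Lemma latticeZ (c : int) a : L a -> L (c *: a).
Proof.
move=> La; rewrite -[c]intz scaler_int; case: c => k; first exact: latticeMn.
by rewrite NegzE mulrNz; exact: (latticeN (latticeMn k.+1 La)).
Qed.

Lemma lattice_sum m (F : 'I_m -> 'rV[int]_s) :
  (forall i, L (F i)) -> L (\sum_(i < m) F i).
Proof. by move=> LF; apply: big_ind => //; [apply: lattice0 | apply: latticeD]. Qed.

Lemma lattice_subC a b : L (a - b) -> L (b - a).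
Proof. by move=> Lab; rewrite -opprB; apply: latticeN. Qed.

Lemma lattice_sub_trans a b c : L (a - c) -> L (b - c) -> L (a - b).
Proof.
move=> Lac Lbc; have -> : a - b = (a - c) - (b - c) by rewrite opprB addrA subrK.
exact: latticeB.
Qed.

End Lattice.

Lemma homogeneous_sum_eq s (L : 'rV[int]_s -> Prop) a b :
  homogeneous L -> L (a - b) -> \sum_(i < s) a ord0 i = \sum_(i < s) b ord0 i.
Proof.
move=> homL /homL; under eq_bigr do rewrite !mxE.
by rewrite sumrB => /eqP; rewrite subr_eq0 => /eqP.
Qed.

Section MonomialVectors.
Variable s : nat.

Definition mnm_vec (m : 'X_{1..s}) : 'rV[int]_s := \row_i (m i)%:Z.

Lemma mnm_vecE m i : mnm_vec m ord0 i = (m i)%:Z. Proof. by rewrite mxE. Qed.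

Lemma mnm_vecD m m' : mnm_vec (m + m')%MM = mnm_vec m + mnm_vec m'.
Proof. by apply/rowP => i; rewrite !mxE mnmDE PoszD. Qed.

Lemma mnm_vec_inj : injective mnm_vec.
Proof.
by move=> m m' /rowP eq_mm'; apply/mnmP => i; have := eq_mm' i; rewrite !mxE => -[].
Qed.

Lemma mnm_vec_nonneg (x : 'rV[int]_s) :
  (forall i, 0 <= x ord0 i) -> exists m, mnm_vec m = x.
Proof.
move=> x_ge0; exists [multinom `|x ord0 i|%N | i < s]; apply/rowP => i.
by rewrite !mxE mnmE gez0_abs ?x_ge0.
Qed.

Lemma mnm_vec_mpos_mneg (a : 'rV[int]_s) : mnm_vec (mpos a) - mnm_vec (mneg a) = a.
Proof.
apply/rowP => i; rewrite !mxE !mnmE; change (a 0 i) with (a ord0 i).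
by case: (ltrP (a ord0 i) 0) => a_i; lia.
Qed.

Definition revlexz_gt (a b : 'rV[int]_s) : Prop :=
  exists i : 'I_s, a ord0 i < b ord0 i /\
    forall j : 'I_s, (i < j)%N -> a ord0 j = b ord0 j.

Lemma revlexz_gt_irr a : ~ revlexz_gt a a.
Proof. by case=> i []; rewrite ltxx. Qed.

Lemma revlexz_gt_trans a b c : revlexz_gt a b -> revlexz_gt b c -> revlexz_gt a c.
Proof.
move=> [i [ab_i ab_above]] [j [bc_j bc_above]].
case: (ltngtP i j) => [lt_ij|lt_ji|/val_inj eq_ij].
- exists j; split; first by rewrite ab_above.
  by move=> k lt_jk; rewrite ab_above ?bc_above // (ltn_trans lt_ij).
- exists i; split; first by rewrite -bc_above.
  by move=> k lt_ik; rewrite ab_above ?bc_above // (ltn_trans lt_ji).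
- subst j; exists i; split; first exact: lt_trans bc_j.
  by move=> k lt_ik; rewrite ab_above ?bc_above.
Qed.

Lemma revlexz_gtD2r c a b : revlexz_gt a b -> revlexz_gt (a + c) (b + c).
Proof.
move=> [i [ab_i ab_above]]; exists i; split; first by rewrite !mxE ltrD2r.
by move=> j lt_ij; rewrite !mxE ab_above.
Qed.

Lemma revlexz_gt_total a b : a != b -> revlexz_gt a b \/ revlexz_gt b a.
Proof.
move=> neq_ab.
have [i0 neq_i0] : exists i, a ord0 i != b ord0 i.
  apply/existsP; apply: contraR neq_ab => /existsPn eq_ab; apply/eqP/rowP => i.
  by apply/eqP; rewrite -[_ == _]negbK eq_ab.
have [i neq_i max_i] :=
  @arg_maxnP _ i0 (fun i => a ord0 i != b ord0 i) (fun i : 'I_s => val i) neq_i0.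
have eq_above (j : 'I_s) : (i < j)%N -> a ord0 j = b ord0 j.
  by move=> lt_ij; apply/eqP; apply: contraTT lt_ij => /max_i; rewrite -leqNgt.
have [lt_i|gt_i|eq_i] := ltgtP (a ord0 i) (b ord0 i); last by rewrite eq_i eqxx in neq_i.
- by left; exists i; split => // j /eq_above.
- by right; exists i; split => // j /eq_above ->.
Qed.

Lemma revlex_gtE (m m' : 'X_{1..s}) :
  revlex_gt m m' <-> revlexz_gt (mnm_vec m) (mnm_vec m').
Proof.
split=> -[i [lt_i eq_above]]; exists i; rewrite !mnm_vecE ltz_nat in lt_i *.
  by split=> // j /eq_above; rewrite !mnm_vecE => ->.
by split=> // j /eq_above; rewrite !mnm_vecE => -[].
Qed.

End MonomialVectors.

Section CoefSum.
Variables (R : nzRingType) (n : nat) (P : pred 'X_{1..n}).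

Definition coef_sum (g : {mpoly R[n]}) : R := \sum_(m <- msupp g | P m) g@_m.

Lemma coef_sumE (r : seq 'X_{1..n}) g : uniq r -> {subset msupp g <= r} ->
  coef_sum g = \sum_(m <- r | P m) g@_m.
Proof.
move=> uniq_r sub_r; symmetry.
rewrite (bigID (mem (msupp g))) /= [X in _ + X]big1 ?addr0; last first.
  by move=> m /andP[_ /memN_msupp_eq0].
rewrite (eq_bigl (fun m => (m \in msupp g) && P m)) => [|m]; last exact: andbC.
rewrite -big_filter_cond; apply: perm_big; apply: uniq_perm.
- exact: filter_uniq.
- exact: msupp_uniq.
- by move=> m; rewrite mem_filter andb_idr //; apply: sub_r.
Qed.

Lemma coef_sum_is_zmod_morphism : zmod_morphism coef_sum.
Proof.
move=> g h; set r := undup (msupp g ++ msupp h).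
have sub_g : {subset msupp g <= r} by move=> m m_g; rewrite mem_undup mem_cat m_g.
have sub_h : {subset msupp h <= r} by move=> m m_h; rewrite mem_undup mem_cat m_h orbT.
have sub_gh : {subset msupp (g - h) <= r}.
  by move=> m /msuppD_le; rewrite mem_cat (perm_mem (msuppN _)) => /orP[/sub_g|/sub_h].
rewrite !(@coef_sumE r) ?undup_uniq // -sumrB.
by apply: eq_bigr => m _; rewrite mcoeffB.
Qed.

HB.instance Definition _ :=
  GRing.isZmodMorphism.Build {mpoly R[n]} R coef_sum coef_sum_is_zmod_morphism.

Lemma coef_sumZX (c : R) m : coef_sum (c *: 'X_[m]) = if P m then c else 0.
Proof.
rewrite (@coef_sumE [:: m]) //; last by move=> m' /msuppZ_le; rewrite msuppX.
by rewrite big_mkcond big_seq1 mcoeffZ mcoeffX eqxx mulr1.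
Qed.

Lemma coef_sum_mulX c m :
  coef_sum (c * 'X_[m]) = \sum_(m' <- msupp c | P (m' + m)%MM) c@_m'.
Proof.
rewrite {1}(mpolyE c) mulr_suml raddf_sum [RHS]big_mkcond /=.
by apply: eq_bigr => m' _; rewrite -scalerAl -mpolyXD coef_sumZX.
Qed.

Lemma coef_sum_mul_binomial c m m' :
  (forall w, P (w + m)%MM = P (w + m')%MM) -> coef_sum (c * ('X_[m] - 'X_[m'])) = 0.
Proof.
by move=> P_eq; rewrite mulrBr raddfB /= !coef_sum_mulX (eq_bigl _ _ P_eq) subrr.
Qed.

End CoefSum.

Lemma ideal_gen_mul (R : comNzRingType) (G : R -> Prop) c g :
  G g -> ideal_gen G (c * g).
Proof. by move=> Gg; exists 1%N, (fun=> c), (fun=> g); rewrite big_ord1. Qed.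

Section InitialIdeal.
Variables (K : fieldType) (s : nat) (L : 'rV[int]_s -> Prop).
Hypothesis latL : is_lattice L.

Local Notation I := (lattice_ideal (K := K) L).

Lemma lattice_ideal_coef_sum (P : pred 'X_{1..s}) g :
  (forall w m m', L (mnm_vec m - mnm_vec m') -> P (w + m)%MM = P (w + m')%MM) ->
  I g -> coef_sum P g = 0.
Proof.
move=> P_cong [k [c [h [Ih ->]]]]; rewrite raddf_sum big1 // => i _ /=.
have [a [La ->]] := Ih i; apply: coef_sum_mul_binomial => w.
by apply: P_cong; rewrite mnm_vec_mpos_mneg.
Qed.

(* The coefficients of [f] on a class of monomials modulo [L] sum to zero, so the class
   of a monomial of [f] contains another one. *)
Lemma lattice_ideal_supp_cong f m : I f -> m \in msupp f ->
  exists2 m', m' \in msupp f & m' != m /\ L (mnm_vec m - mnm_vec m').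
Proof.
move=> If f_m; pose P w := `[< L (mnm_vec w - mnm_vec m) >].
have P_cong w m1 m2 : L (mnm_vec m1 - mnm_vec m2) -> P (w + m1)%MM = P (w + m2)%MM.
  move=> L12; apply/asboolP/asboolP => Lw.
    have -> : mnm_vec (w + m2) - mnm_vec m =
              (mnm_vec (w + m1) - mnm_vec m) - (mnm_vec m1 - mnm_vec m2).
      by apply/rowP => i; rewrite !mxE !mnmDE; lia.
    exact: latticeB.
  have -> : mnm_vec (w + m1) - mnm_vec m =
            (mnm_vec (w + m2) - mnm_vec m) + (mnm_vec m1 - mnm_vec m2).
    by apply/rowP => i; rewrite !mxE !mnmDE; lia.
  exact: latticeD.
have := lattice_ideal_coef_sum P_cong If.
have Pm : P m by apply/asboolP; rewrite subrr; apply: lattice0.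
rewrite /coef_sum big_mkcond (bigD1_seq m) ?msupp_uniq //= Pm.
move=> sum0; apply: contrapT => no_partner; move: f_m.
rewrite mcoeff_msupp -sum0 big1_seq ?addr0 ?eqxx // => w /andP[w_m w_f].
case: ifP => // /asboolP Lw; case: no_partner; exists w => //.
by split => //; apply: lattice_subC.
Qed.

Lemma initial_monomial_descent u : initial_ideal I 'X_[u] ->
  exists u', revlex_gt u u' /\ L (mnm_vec u - mnm_vec u').
Proof.
move=> [k [c [t [lead_t Xu]]]].
have /existsP[i nz_i] : [exists i, (c i * t i)@_u != 0].
  apply: contraT => /existsPn all0; move/(congr1 (mcoeff u)): Xu.
  rewrite mcoeffX eqxx raddf_sum big1 => [/eqP|i _]; first by rewrite oner_eq0.
  by apply/eqP; rewrite -[_ == _]negbK all0.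
have [f [If [_ [m [f_m [lead_m t_i]]]]]] := lead_t i.
have : (c i * 'X_[m])@_u != 0.
  by apply: contraNneq nz_i; rewrite t_i -scalerAr mcoeffZ => ->; rewrite mulr0.
rewrite -mcoeff_msupp (perm_mem (msuppMX _ _)) => /mapP[w _ ->].
have [m' f_m' [neq_m'm Lmm']] := lattice_ideal_supp_cong If f_m.
exists (w + m')%MM; split.
- apply/revlex_gtE; rewrite !mnm_vecD ![mnm_vec w + _]addrC.
  by apply: revlexz_gtD2r; apply/revlex_gtE/lead_m.
- by rewrite !mnm_vecD opprD addrACA subrKA.
Qed.

Lemma initial_binomial u v : revlex_gt u v -> L (mnm_vec u - mnm_vec v) ->
  initial_ideal I 'X_[u].
Proof.
move=> gt_uv Luv; have neq_uv : u != v.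
  by apply/eqP => eq_uv; move: gt_uv; rewrite eq_uv => /revlex_gtE/revlexz_gt_irr.
have coef_u : ('X_[u] - 'X_[v] : {mpoly K[s]})@_u = 1.
  by rewrite mcoeffB !mcoeffX eqxx eq_sym (negbTE neq_uv) subr0.
rewrite -['X_[u]]mul1r; apply: ideal_gen_mul; exists ('X_[u] - 'X_[v]); split; last split.
- pose l := mnm_vec u - mnm_vec v; pose w := [multinom minn (u i) (v i) | i < s].
  have -> : 'X_[u] - 'X_[v] = 'X_[w] * ('X_[mpos l] - 'X_[mneg l]) :> {mpoly K[s]}.
    rewrite mulrBr -!mpolyXD; congr ('X_[_] - 'X_[_]);
      by apply/mnmP => i; rewrite mnmDE !mnmE !mxE; case: ifP; lia.
  by apply: ideal_gen_mul; exists l.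
- by apply/eqP => eq0; move: coef_u; rewrite eq0 mcoeff0 => /eqP; rewrite eq_sym oner_eq0.
- exists u; split; last split; last by rewrite coef_u scale1r.
  + by rewrite mcoeff_msupp coef_u oner_neq0.
  + move=> m; rewrite mcoeff_msupp mcoeffB !mcoeffX [u == m]eq_sym => nz_m /negbTE neq_mu.
    move: nz_m; rewrite neq_mu sub0r oppr_eq0.
    by case: (v =P m) => [<- //|_]; rewrite eqxx.
Qed.

Lemma initial_monomialP u : initial_ideal I 'X_[u] <->
  exists v, revlex_gt u v /\ L (mnm_vec u - mnm_vec v).
Proof.
split; first exact: initial_monomial_descent.
by case=> v [gt_uv Luv]; apply: initial_binomial gt_uv Luv.
Qed.

End InitialIdeal.

Lemma submx_corank1_kernel (F : fieldType) r s (M : 'M[F]_(r, s)) (c : 'cV[F]_s)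
    (v : 'rV[F]_s) :
  c != 0 -> M *m c = 0 -> \rank M = s.-1 -> v *m c = 0 -> (v <= M)%MS.
Proof.
move=> nz_c Mc rkM vc; set N := col_mx M v.
have rkN : (\rank N <= s.-1)%N.
  have := mulmx0_rank_max (_ : N *m c = 0).
  rewrite mul_col_mx Mc vc col_mx0 => /(_ erefl).
  by rewrite -mxrank_eq0 in nz_c; lia.
have sMN : (M <= N)%MS by rewrite -addsmxE addsmxSl.
have sNM : (N <= M)%MS.
  have [_ <-] := mxrank_leqif_sup sMN.
  by rewrite eqn_leq rkM rkN andbT -{1}rkM; apply: mxrankS.
by apply: submx_trans sNM; rewrite -addsmxE addsmxSr.
Qed.

Lemma rat_submx_int_multiple r s (M : 'M[int]_(r, s)) (v : 'rV[int]_s) :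
  (map_mx intr v <= map_mx (intr : int -> rat) M)%MS ->
  exists2 k : nat, (0 < k)%N & exists y : 'rV[int]_r, v *+ k = y *m M.
Proof.
case/submxP => x vxM; pose d : int := \prod_j denq (x ord0 j).
have d_gt0 : 0 < d by apply: prodr_gt0 => j _; apply: denq_gt0.
have [y yE] : exists y : 'rV[int]_r, forall j, (y ord0 j)%:~R = d%:~R * x ord0 j.
  exists (\row_j (numq (x ord0 j) * \prod_(l | l != j) denq (x ord0 l))) => j.
  by rewrite mxE /d [X in _ = X%:~R * _](bigD1 j) //= !intrM numqE; ring.
case: d d_gt0 yE => // k k_gt0 yE; exists k => //; exists y.
apply/rowP => i; apply: (@intr_inj rat); move/rowP/(_ i): vxM.
rewrite !mxE => vxM_i; rewrite -[v *+ k]/(v *~ k) -scaler_int !mxE intrM vxM_i.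
rewrite mulr_sumr rmorph_sum; apply: eq_bigr => j _.
by rewrite rmorphM /= yE !mxE intz mulrA.
Qed.

Lemma homogeneous_lattice_multiple s (L : 'rV[int]_s -> Prop) (v : 'rV[int]_s) :
  (0 < s)%N -> is_lattice L -> homogeneous L -> lattice_rank L s.-1 ->
  \sum_(i < s) v ord0 i = 0 -> exists2 k : nat, (0 < k)%N & L (v *+ k).
Proof.
move=> s_gt0 latL homL [[M [LM rkM]] _] v0.
pose ones : 'cV[rat]_s := const_mx 1.
have rows_sum0 r (A : 'M[int]_(r, s)) :
    (forall i, \sum_j A i j = 0) -> map_mx intr A *m ones = 0.
  move=> A0; apply/colP => i; rewrite !mxE -[RHS]/((0 : int)%:~R) -(A0 i) rmorph_sum.
  by apply: eq_bigr => j _; rewrite !mxE mulr1.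
have nz_ones : ones != 0.
  by apply/eqP => /colP/(_ (Ordinal s_gt0)); rewrite !mxE => /eqP; rewrite oner_eq0.
have Mones : map_mx intr M *m ones = 0.
  apply: rows_sum0 => i; rewrite -[RHS](homL _ (LM i)).
  by apply: eq_bigr => j _; rewrite mxE.
have vones : map_mx intr v *m ones = 0 by apply: rows_sum0 => i; rewrite ord1.
have [k k_gt0 [y vk]] :=
  rat_submx_int_multiple (submx_corank1_kernel nz_ones Mones rkM vones).
exists k; rewrite // vk mulmx_sum_row; apply: lattice_sum => // j.
by apply: latticeZ => //; apply: LM.
Qed.

Lemma finite_descent (X : Type) (T : finType) (enc : X -> T) (P Q : X -> Prop)
    (gt : X -> X -> Prop) :
  (forall x, ~ gt x x) -> (forall x y z, gt x y -> gt y z -> gt x z) ->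
  (forall x y, P x -> P y -> enc x = enc y -> x = y) ->
  (forall x, P x -> ~ Q x -> exists2 y, P y & gt x y) ->
  forall x, P x -> exists2 y, P y & Q y.
Proof.
move=> gt_irr gt_trans enc_inj descent.
pose below x := [set t | `[< exists2 y, P y & enc y = t /\ gt x y >]].
suff below_ind k x : (#|below x| < k)%N -> P x -> exists2 y, P y & Q y.
  by move=> x; apply: below_ind (ltnSn _).
elim: k x => // k IHk x lt_x_k Px.
have [Qx|nQx] := EM (Q x); first by exists x.
have [y Py gt_xy] := descent x Px nQx; apply: (IHk y) => //.
suff: below y \proper below x by move/proper_card/leq_trans; apply.
apply/properP; split.
- apply/subsetP => t; rewrite !inE => /asboolP[z Pz [<- gt_yz]].
  by apply/asboolP; exists z => //; split => //; apply: gt_trans gt_yz.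
- exists (enc y); rewrite !inE; first by apply/asboolP; exists y.
  apply/negP => /asboolP[z Pz [/enc_inj eq_zy gt_yz]].
  by move: gt_yz; rewrite (eq_zy Pz Py) => /gt_irr.
Qed.

Section Truncation.
Variable n : nat.

Lemma eq_ord_max (i : 'I_n.+1) : (n <= i)%N -> i = ord_max.
Proof. by move=> le_ni; apply/val_inj/eqP; rewrite eqn_leq le_ni -ltnS ltn_ord. Qed.

Lemma trunc_mon_max (a : 'rV[int]_n.+1) : trunc_mon a ord_max = 0%N.
Proof. by rewrite mnmE ltnn. Qed.

Lemma trunc_monE (a : 'rV[int]_n.+1) (i : 'I_n.+1) :
  0 <= a ord0 i -> (i < n)%N -> (trunc_mon a i)%:Z = a ord0 i.
Proof. by move=> a_i_ge0 lt_in; rewrite mnmE lt_in gez0_abs. Qed.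

Lemma revlex_gt_max_eq0 (m m' : 'X_{1..n.+1}) :
  revlex_gt m m' -> m' ord_max = 0%N -> m ord_max = 0%N.
Proof.
move=> [i [lt_i eq_above]] m'_max0; have [lt_in|/eq_ord_max eq_i] := ltnP i n.
  by rewrite eq_above.
by move: lt_i; rewrite eq_i m'_max0.
Qed.

End Truncation.

Section StandardRepresentative.
Variables (K : fieldType) (n : nat) (L : 'rV[int]_n.+1 -> Prop).
Hypotheses (latL : is_lattice L) (homL : homogeneous L) (rkL : lattice_rank L n).

Definition nonneg_head (a : 'rV[int]_n.+1) :=
  forall i : 'I_n.+1, (i < n)%N -> 0 <= a ord0 i.

Local Notation standard m := (~ initial_ideal (lattice_ideal (K := K) L) 'X_[m]).

Lemma standard_rep_unique a b :
  nonneg_head a -> nonneg_head b -> standard (trunc_mon a) -> standard (trunc_mon b) ->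
  L (a - b) -> a = b.
Proof.
wlog le_ab : a b / a ord0 ord_max <= b ord0 ord_max.
  move=> wlog_ab a_ge0 b_ge0 std_a std_b Lab.
  have [le|/ltW le] := lerP (a ord0 ord_max) (b ord0 ord_max); first exact: wlog_ab.
  by apply/esym/wlog_ab => //; apply: lattice_subC.
move=> a_ge0 b_ge0 std_a std_b Lab; apply: contrapT => neq_ab; set u := trunc_mon a.
have [v vE] : exists v, mnm_vec v = b - a + mnm_vec u.
  apply: mnm_vec_nonneg => i; rewrite !mxE; have [lt_in|/eq_ord_max ->] := ltnP i n.
    by rewrite trunc_monE ?a_ge0 // subrK b_ge0.
  by rewrite trunc_mon_max addr0 subr_ge0.
have uvE : mnm_vec u - mnm_vec v = a - b by rewrite vE opprD addrC addrNK opprB.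
have Luv : L (mnm_vec u - mnm_vec v) by rewrite uvE.
have : mnm_vec u != mnm_vec v by rewrite -subr_eq0 uvE subr_eq0; apply/eqP.
case/revlexz_gt_total => /revlex_gtE gt_uv.
  by apply: std_a; apply/(initial_monomialP K latL); exists v.
have vE' : v = trunc_mon b.
  apply/mnm_vec_inj/rowP => i; have [lt_in|/eq_ord_max ->] := ltnP i n.
    by rewrite vE !mxE !trunc_monE ?a_ge0 ?b_ge0 // subrK.
  by rewrite !mxE trunc_mon_max (revlex_gt_max_eq0 gt_uv (trunc_mon_max a)).
apply: std_b; apply/(initial_monomialP K latL); rewrite -vE'; exists u.
by split => //; apply: lattice_subC.
Qed.

Lemma nonneg_head_rep alpha : exists2 a, L (a - alpha) & nonneg_head a.
Proof.
pose e i : 'rV[int]_n.+1 := 'e_i - 'e_ord_max.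
have sum_delta j0 : \sum_j ('e_j0 : 'rV[int]_n.+1) ord0 j = 1.
  by rewrite (bigD1 j0) //= big1 ?addr0 => [|j /negbTE nj]; rewrite mxE ?eqxx // nj.
have /fin_all_exists[k k_e] : forall i, exists k : nat, (0 < k)%N /\ L (e i *+ k).
  move=> i; have e_sum0 : \sum_j e i ord0 j = 0.
    by under eq_bigr do rewrite mxE [X in _ + X]mxE; rewrite sumrB !sum_delta subrr.
  have [k k_gt0 Lk] := homogeneous_lattice_multiple (ltn0Sn n) latL homL rkL e_sum0.
  by exists k.
exists (alpha + \sum_i e i *+ (k i * `|alpha ord0 i|)).
  rewrite addrAC subrr add0r; apply: lattice_sum => // i.
  by rewrite mulrnA; apply: latticeMn => //; case: (k_e i).
move=> i lt_in; have /negbTE neq_i_max : i != ord_max.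
  by apply: contraTneq lt_in => ->; rewrite ltnn.
rewrite !mxE summxE (bigD1 i) //= big1 => [|j /negbTE neq_ji]; last first.
  by rewrite mulmxnE !mxE neq_i_max [i == j]eq_sym neq_ji subrr mul0rn.
rewrite mulmxnE !mxE eqxx neq_i_max subr0 addr0 /= natz.
have [/(leq_pmull `|alpha ord0 i|) le_k _] := k_e i.
by move: (k i * _)%N le_k => m; move: (alpha ord0 i) => x; lia.
Qed.

Definition rep_above (a0 a : 'rV[int]_n.+1) :=
  [/\ L (a - a0), nonneg_head a & a0 ord0 ord_max <= a ord0 ord_max].

Lemma rep_above_encoding a0 : exists N (enc : 'rV[int]_n.+1 -> {ffun 'I_n.+1 -> 'I_N}),
  forall a b, rep_above a0 a -> rep_above a0 b -> enc a = enc b -> a = b.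
Proof.
pose d (a : 'rV[int]_n.+1) (i : 'I_n.+1) : int :=
  if (i < n)%N then a ord0 i else a ord0 i - a0 ord0 ord_max.
have d_ge0 a i : rep_above a0 a -> 0 <= d a i.
  case=> _ a_ge0 le_max; rewrite /d; case: ltnP => [/a_ge0 //|/eq_ord_max ->].
  by rewrite subr_ge0.
have d_sum a : rep_above a0 a -> \sum_i d a i = \sum_i d a0 i.
  have d_sumE b : \sum_i d b i = \sum_i b ord0 i - a0 ord0 ord_max.
    rewrite /d !big_ord_recr /= ltnn addrA; congr (_ + _ - _).
    by apply: eq_bigr => i _; rewrite ltn_ord.
  by case=> La _ _; rewrite !d_sumE (homogeneous_sum_eq homL La).
pose N := absz (\sum_i d a0 i).
have d_lt a i : rep_above a0 a -> (`|d a i| < N.+1)%N.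
  move=> rep; rewrite ltnS /N -(d_sum _ rep); have d_a_ge0 := d_ge0 a _ rep.
  have : d a i <= \sum_j d a j by rewrite (bigD1 i) //= lerDl sumr_ge0.
  by have := d_a_ge0 i; move: (d a i) (\sum_j _) => x y; lia.
exists N.+1, (fun a => [ffun i => inord `|d a i|]) => a b rep_a rep_b.
move/ffunP => enc_ab; apply/rowP => i; change (a ord0 i = b ord0 i).
have := congr1 val (enc_ab i).
rewrite !ffunE /= !inordK ?d_lt // => eq_d.
have := d_ge0 a i rep_a; have := d_ge0 b i rep_b.
by move: eq_d; rewrite /d; case: ltnP => _; move: (a ord0 i) (b ord0 i) => x y; lia.
Qed.

Lemma nonstandard_descent a0 a : rep_above a0 a -> ~ standard (trunc_mon a) ->
  exists2 b, rep_above a0 b & revlexz_gt a b.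
Proof.
case=> La a_ge0 le_max /contrapT /(initial_monomialP K latL) [u [gt_tu Ltu]].
set t := trunc_mon a in gt_tu Ltu *; exists (mnm_vec u + (a - mnm_vec t)).
  split.
  - have -> : mnm_vec u + (a - mnm_vec t) - a0 = (a - a0) - (mnm_vec t - mnm_vec u).
      by apply/rowP => i; rewrite !mxE; lia.
    exact: latticeB.
  - by move=> i lt_in; rewrite !mxE trunc_monE ?a_ge0 // subrr addr0.
  - by rewrite !mxE trunc_mon_max subr0; apply: le_trans le_max _; rewrite lerDr.
have := revlexz_gtD2r (a - mnm_vec t) (proj1 (revlex_gtE _ _) gt_tu).
by rewrite addrC subrK.
Qed.

Lemma standard_rep_exists alpha :
  exists a, nonneg_head a /\ standard (trunc_mon a) /\ L (a - alpha).
Proof.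
have [a0 La0 a0_ge0] := nonneg_head_rep alpha.
have [N [enc enc_inj]] := rep_above_encoding a0.
have rep_a0 : rep_above a0 a0 by split; rewrite ?subrr //; apply: lattice0.
have [a [La a_ge0 _] std_a] := finite_descent (@revlexz_gt_irr _) (@revlexz_gt_trans _)
  enc_inj (@nonstandard_descent a0) rep_a0.
by exists a; split => //; split => //; rewrite -(subrKA a0); apply: latticeD.
Qed.

End StandardRepresentative.

Theorem lemma3p10 (K : fieldType) (s : nat) (L : 'rV[int]_s -> Prop) :
  (2 <= s)%N -> is_lattice L -> homogeneous L -> lattice_rank L s.-1 ->
  forall alpha : 'rV[int]_s, torsion_class L alpha ->
  exists! a : 'rV[int]_s,
    (forall i : 'I_s, (i < s.-1)%N -> 0 <= a ord0 i) /\
    ~ initial_ideal (@lattice_ideal K s L) 'X_[trunc_mon a] /\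
    L (a - alpha).
Proof.
case: s L => // n L _ latL homL rkL alpha _.
have [a [a_ge0 [std_a La]]] := standard_rep_exists K latL homL rkL alpha.
exists a; split=> // b [b_ge0 [std_b Lb]].
exact (standard_rep_unique latL a_ge0 b_ge0 std_a std_b (lattice_sub_trans latL La Lb)).
Qed.
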